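(* Consider the WKD-IBE construction and signature algorithm described in the context, with fixed public parameters $\mathsf{Params}=(g,g_1,g_2,g_3,h_1,\dots,h_\ell,h_s)$ and master secret $\alpha$. For any pattern $S$, any two well-formed keys $k_1,k_2$ for the pattern $S$, and any message $m\in\mathbb{Z}_p^*$, the distribution of $\mathbf{Sign}(k_1,m)$ is equal to the distribution of $\mathbf{Sign}(k_2,m)$ (over the internal randomness of $\mathbf{Sign}$); that is, the two signature distributions are information-theoretically indistinguishable.
   Context: Patterns: for a prime $p$ and integer $\ell$, a pattern is $S\in(\mathbb{Z}_p^*\cup\{\bot\})^\ell$; $\mathrm{fixed}(S)=\{(i,S(i)):S(i)\neq\bot\}$, $\mathrm{free}(S)=\{i:S(i)=\bot\}$; $P$ matches $S$ if for all $i$, $P(i)=\bot$ or $P(i)=S(i)$. (In JEDI a (URI, time) pair is encoded as such a pattern.) Construction. Let $\mathbb{G}_1,\mathbb{G}_2,\mathbb{G}_T$ be cyclic groups of prime order $p$ with a bilinear map $e:\mathbb{G}_1\times\mathbb{G}_2\to\mathbb{G}_T$. $\mathbf{Setup}(1^\ell)$: choose $g\in\mathbb{G}_2$ and $g_2,g_3,h_1,\dots,h_\ell,h_s\in\mathbb{G}_1$ uniformly, $\alpha\in\mathbb{Z}_p$ uniformly, set $g_1=g^\alpha$; $\mathsf{Params}=(g,g_1,g_2,g_3,h_1,\dots,h_\ell,h_s)$ and $\mathsf{MasterKey}=g_2^\alpha$. Here $s$ is a special index, distinct from $1,\dots,\ell$, never fixed in a pattern. For a pattern $S$ write $Q_S=g_3\prod_{(i,a_i)\in\mathrm{fixed}(S)}h_i^{a_i}$.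 Keys are triples $(k_0,k_1,B)$ with $k_0\in\mathbb{G}_1$, $k_1\in\mathbb{G}_2$, and $B$ a set of pairs $(j,b_j)$, $b_j\in\mathbb{G}_1$. $\mathbf{KeyDer}$ from the master key to pattern $S$: sample $r\in\mathbb{Z}_p$ and output $(g_2^\alpha Q_S^r,\ g^r,\ \{(j,h_j^r)\}_{j\in\mathrm{free}(S)\cup\{s\}})$. $\mathbf{KeyDer}$ from a key $(k_0,k_1,B)$, $B=\{(i,b_i)\}$, to pattern $S$: sample $t\in\mathbb{Z}_p$ and output $\big(k_0\,Q_S^t\prod_{(i,a_i)\in\mathrm{fixed}(S),\,(i,b_i)\in B}b_i^{a_i},\ g^t k_1,\ \{(j,h_j^t b_j)\}_{j\in\mathrm{free}(S)\cup\{s\}}\big)$. A key for pattern $S$ is well-formed if it equals $(g_2^\alpha Q_S^{r_0},\ g^{r_0},\ \{(j,h_j^{r_0})\}_{j\in\mathrm{free}(S)\cup\{s\}})$ for some $r_0\in\mathbb{Z}_p$. Signing. $\mathbf{Sign}(K,m)$ for a key $K=(k_0,k_1,B)$ for pattern $S$ with $(s,b_s)\in B$ and $m\in\mathbb{Z}_p^*$: sample $t\in\mathbb{Z}_p$ and output $\big(k_0\,(Q_S\,h_s^m)^t\,b_s^m,\ g^t k_1\big)$. *)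

From mathcomp Require Import all_boot all_fingroup.
From mathcomp Require Import ssralg rat.
Set Implicit Arguments. Unset Strict Implicit. Unset Printing Implicit Defensive.
Import GroupScope.

(* Index set {1..l} ∪ {s}: [Some i] is index i (i : 'I_l), [None] is the
   special index s. *)
Definition idx (l : nat) := option 'I_l.

(* A pattern S ∈ (Z_p^* ∪ {⊥})^l : [S i = None] is ⊥, [S i = Some a] fixes a. *)
Definition pattern (l : nat) := 'I_l -> option nat.

Definition valid_pattern (p l : nat) (S : pattern l) : Prop :=
  forall i a, S i = Some a -> (0 < a < p)%N.

Definition free_or_s (l : nat) (S : pattern l) (j : idx l) : bool :=
  match j with None => true | Some i => S i == None end.

(* Public parameters (g, g1, g2, g3, h_1..h_l, h_s); ph None = h_s. *)
Record params (gT1 gT2 : finGroupType) (l : nat) := Params {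
  pg  : gT2; pg1 : gT2; pg2 : gT1; pg3 : gT1; ph : idx l -> gT1 }.

(* Keys (k0, k1, B); B is a finite partial map idx l -> G1:
   (j, b_j) ∈ B  iff  kB j = Some b_j. *)
Record key (gT1 gT2 : finGroupType) (l : nat) := Key {
  k0 : gT1; k1 : gT2; kB : idx l -> option gT1 }.

Section WKD.
Variables (gT1 gT2 : finGroupType) (l : nat).

Definition QS (P : params gT1 gT2 l) (S : pattern l) : gT1 :=
  pg3 P * \prod_(i < l) (match S i with
                         | Some a => ph P (Some i) ^+ a
                         | None => 1 end).

Definition well_formed (p alpha : nat) (P : params gT1 gT2 l) (S : pattern l)
    (K : key gT1 gT2 l) : Prop :=
  exists r0 : 'I_p,
    [/\ k0 K = pg2 P ^+ alpha * QS P S ^+ r0,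
        k1 K = pg P ^+ r0 &
        forall j, kB K j = if free_or_s S j then Some (ph P j ^+ r0) else None].

(* Sign(K, m) with internal randomness t; None when (s, b_s) ∉ B
   (Sign is then undefined). *)
Definition sign (P : params gT1 gT2 l) (S : pattern l) (K : key gT1 gT2 l)
    (m t : nat) : option (gT1 * gT2) :=
  match kB K None with
  | Some bs => Some (k0 K * (QS P S * ph P None ^+ m) ^+ t * bs ^+ m,
                     pg P ^+ t * k1 K)
  | None => None
  end.

(* Output distribution of Sign(K, m) when t is uniform over Z_p = {0..p-1}:
   Pr[Sign(K,m) = y] = #{t ∈ Z_p | sign K m t = y} / p. *)
Definition sign_dist (p : nat) (P : params gT1 gT2 l) (S : pattern l)
    (K : key gT1 gT2 l) (m : nat) (y : option (gT1 * gT2)) : rat :=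
  ((#|[set t : 'I_p | sign P S K m t == y]|)%:R / (p%:R))%R.

End WKD.

From mathcomp Require Import all_boot all_fingroup.
From mathcomp Require Import ssralg rat.
From mathcomp Require Import cyclic.
Import GroupScope.

(* A well-formed key with randomness r0 signs with randomness t exactly as the
   master key would with randomness t + r0.  Since t + r0 (mod p) is uniform on
   Z_p when t is, the signature distribution does not depend on r0. *)

Lemma card_set_shift (T : eqType) (p r : nat) (F : nat -> T) (y : T) :
    (0 < p)%N -> (forall u, F (u %% p) = F u) ->
  #|[set t : 'I_p | F (t + r) == y]| = #|[set u : 'I_p | F u == y]|.
Proof.
move=> p_gt0 F_mod.
pose shift (t : 'I_p) := Ordinal (ltn_pmod (t + r) p_gt0).
have shift_inj : injective shift.
  move=> t t' /(congr1 val) /= /eqP; rewrite eqn_modDr => /eqP.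
  by rewrite !modn_small // => /val_inj.
rewrite -[RHS](card_preimset _ shift_inj); congr #|pred_of_set _|.
by apply/setP => t; rewrite !inE /= F_mod.
Qed.

Section SignWellFormed.

Context {gT1 gT2 : finGroupType} {l : nat} (P : params gT1 gT2 l).
Context (S : pattern l) (alpha m : nat).

Definition sign_value (u : nat) : gT1 * gT2 :=
  (pg2 P ^+ alpha * (QS P S * ph P None ^+ m) ^+ u, pg P ^+ u).

Lemma sign_value_mod (p u : nat) :
    (QS P S * ph P None ^+ m) ^+ p = 1 -> pg P ^+ p = 1 ->
  sign_value (u %% p) = sign_value u.
Proof. by move=> Wp gp; rewrite /sign_value !expg_mod. Qed.

Hypothesis cQh : commute (QS P S) (ph P None).

Lemma sign_rerandomize (K : key gT1 gT2 l) (r0 t : nat) :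
    k0 K = pg2 P ^+ alpha * QS P S ^+ r0 -> k1 K = pg P ^+ r0 ->
    kB K None = Some (ph P None ^+ r0) ->
  sign P S K m t = Some (sign_value (t + r0)).
Proof.
move=> h0 h1 hB; rewrite /sign hB h0 h1 /sign_value !expgD; congr (Some (_, _)).
set W := QS P S * ph P None ^+ m.
have cQW : commute (QS P S) W.
  by apply: commuteM; [exact: commute_refl | exact: commuteX].
have W_r0 : W ^+ r0 = QS P S ^+ r0 * (ph P None ^+ r0) ^+ m.
  by rewrite expgMn; [rewrite -!expgM mulnC|exact: commuteX].
by rewrite W_r0 -!mulgA (mulgA (QS P S ^+ r0)) (commuteX2 _ _ cQW) !mulgA.
Qed.

Lemma sign_dist_well_formed (p : nat) (K : key gT1 gT2 l) (y : option (gT1 * gT2)) :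
    (0 < p)%N -> (QS P S * ph P None ^+ m) ^+ p = 1 -> pg P ^+ p = 1 ->
    well_formed p alpha P S K ->
  sign_dist p P S K m y =
    ((#|[set u : 'I_p | Some (sign_value u) == y]|)%:R / p%:R)%R.
Proof.
move=> p_gt0 Wp gp [r0 [h0 h1 hB]]; rewrite /sign_dist.
have -> : [set t : 'I_p | sign P S K m t == y] =
          [set t : 'I_p | Some (sign_value (t + r0)) == y].
  by apply/setP => t; rewrite !inE (sign_rerandomize K r0 t h0 h1 (hB None)).
rewrite (card_set_shift _ _ _ (fun u => Some (sign_value u))) // => u.
by rewrite sign_value_mod.
Qed.

End SignWellFormed.

Lemma QS_in_group (gT1 gT2 : finGroupType) (l : nat) (P : params gT1 gT2 l)
    (S : pattern l) (G : {group gT1}) :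
  pg3 P \in G -> (forall j, ph P j \in G) -> QS P S \in G.
Proof.
move=> g3G hG; rewrite /QS groupM //; apply: group_prod => i _.
by case: (S i) => [a|]; rewrite ?groupX ?group1.
Qed.

Theorem theorem2
  (p : nat) (hp : prime p)
  (gT1 gT2 gTT : finGroupType)
  (G1 : {group gT1}) (G2 : {group gT2}) (GT : {group gTT})
  (hG1 : #|G1| = p) (hG2 : #|G2| = p) (hGT : #|GT| = p)
  (e : gT1 -> gT2 -> gTT)
  (he_in : forall x y, x \in G1 -> y \in G2 -> e x y \in GT)
  (he_bil : forall x y (a b : nat), x \in G1 -> y \in G2 ->
              e (x ^+ a) (y ^+ b) = e x y ^+ (a * b))
  (l : nat) (P : params gT1 gT2 l) (alpha : nat) (halpha : (alpha < p)%N)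
  (hg : pg P \in G2) (hg1 : pg1 P = pg P ^+ alpha)
  (hg2 : pg2 P \in G1) (hg3 : pg3 P \in G1)
  (hh : forall j, ph P j \in G1)
  (S : pattern l) (hS : valid_pattern p S)
  (K1 K2 : key gT1 gT2 l)
  (hK1 : well_formed p alpha P S K1) (hK2 : well_formed p alpha P S K2)
  (m : nat) (hm : (0 < m < p)%N) :
  forall y : option (gT1 * gT2),
    sign_dist p P S K1 m y = sign_dist p P S K2 m y.
Proof.
move=> y; have p_gt0 := prime_gt0 hp.
have QG : QS P S \in G1 by apply: QS_in_group.
have cQh : commute (QS P S) (ph P None).
  have G1_abelian : abelian G1 by rewrite cyclic_abelian ?prime_cyclic ?hG1.
  exact: (centsP G1_abelian).
have Wp : (QS P S * ph P None ^+ m) ^+ p = 1.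
  by rewrite -hG1 expg_cardG // groupM ?groupX.
have gp : pg P ^+ p = 1 by rewrite -hG2 expg_cardG.
by rewrite !(sign_dist_well_formed P S alpha m cQh).
Qed.
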